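(* Let $P_1,\dots,P_5\in\mathbb{R}^3$, indices taken mod 5, satisfy $\det(P_{i-1},P_i,P_{i+1})=1$ for all $i$, and let $a_i,b_i$ (5-periodic) be the coefficients with $P_{i+2}=a_{i+1}P_{i+1}-b_iP_i+P_{i-1}$ for all $i$. Then for all $i$ (mod 5), $$b_i=a_{i+3},\qquad a_i+1=a_{i+2}a_{i+3}.$$
   Context: A polygon $(P_i)$ in $\mathbb{R}^3$ with $\det(P_{i-1},P_i,P_{i+1})=1$ for all $i$ is called unimodular; for such a polygon the vectors $P_{i-1},P_i,P_{i+1}$ form a basis, and the unimodularity forces the coefficient of $P_{i-1}$ in the expansion of $P_{i+2}$ to be $1$, so the recurrence $P_{i+2}=a_{i+1}P_{i+1}-b_iP_i+P_{i-1}$ defines the sequences $a_i,b_i$. *)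

From HB Require Import structures.
From mathcomp Require Import all_boot all_order all_algebra.
From mathcomp Require Import all_classical all_reals.
Set Implicit Arguments. Unset Strict Implicit. Unset Printing Implicit Defensive.
Import Order.TTheory GRing.Theory Num.Theory.
Local Open Scope ring_scope.

(* The 3x3 matrix whose rows are u, v, w (det is the same as with columns). *)
Definition mat3 (R : ringType) (u v w : 'rV[R]_3) : 'M[R]_3 :=
  \matrix_(k < 3, j < 3) (nth 0 [:: u; v; w] k) 0 j.

Definition det3 (R : comRingType) (u v w : 'rV[R]_3) : R := \det (mat3 u v w).

From HB Require Import structures.
From mathcomp Require Import all_boot all_order all_algebra.
From mathcomp Require Import all_classical all_reals.
From mathcomp Require Import ring.
Import Order.TTheory GRing.Theory Num.Theory.
Local Open Scope ring_scope.

(* Substituting the recurrence into a determinant and using that det3 is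
   alternating and linear in each slot gives, for any unimodular polygon,
     det(P_{j-1}, P_j, P_{j+2}) = a_{j+1},   det(P_{j-1}, P_{j+1}, P_{j+2}) = b_j,
     det(P_{j-1}, P_{j+1}, P_{j+3}) = a_{j+2} b_j - 1.
   For a pentagon P_{j+3} = P_{j-2} and P_{j+4} = P_{j-1}, so the last two
   determinants are cyclic rotations of instances of the first one; this
   yields b_i = a_{i+3} and a_i = a_{i+2} b_i - 1. *)

Section Det3.

Variable R : comNzRingType.
Implicit Types (u v w p q r : 'rV[R]_3) (x y : R).

(* Lets the lifted ordinals produced by Laplace expansion reduce to numerals. *)
Lemma row3E u : u = \row_k [:: u 0 0; u 0 1; u 0 2]`_k.
Proof. by apply/rowP => -[[|[|[|]]] lt_k3] //=; rewrite mxE /=; congr (u 0 _); apply/val_inj. Qed.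

Lemma det3E u v w : det3 u v w =
  u 0 0 * (v 0 1 * w 0 2 - v 0 2 * w 0 1) - u 0 1 * (v 0 0 * w 0 2 - v 0 2 * w 0 0)
  + u 0 2 * (v 0 0 * w 0 1 - v 0 1 * w 0 0).
Proof.
rewrite {1}(row3E u) {1}(row3E v) {1}(row3E w) /det3 /mat3.
rewrite !(expand_det_row _ ord0) !big_ord_recl !big_ord0 /cofactor.
rewrite !(expand_det_row _ ord0) !big_ord_recl !big_ord0 /cofactor.
rewrite !det_mx11 !mxE /= ?mxE /bump /=.
ring.
Qed.

Lemma det3_cycle u v w : det3 u v w = det3 v w u.
Proof. rewrite !det3E; ring. Qed.

Lemma det3_swap23 u v w : det3 u w v = - det3 u v w.
Proof. rewrite !det3E; ring. Qed.

Lemma det3_rep13 u v : det3 u v u = 0.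
Proof. rewrite det3E; ring. Qed.

Lemma det3_rep23 u v : det3 u v v = 0.
Proof. rewrite det3E; ring. Qed.

Lemma det3_linear3 u v x y p q r :
  det3 u v (x *: p - y *: q + r) = x * det3 u v p - y * det3 u v q + det3 u v r.
Proof. rewrite !det3E !mxE; ring. Qed.

End Det3.

Section UnimodularPolygon.

Context {R : comNzRingType} {I : pzRingType} {P : I -> 'rV[R]_3} {a b : I -> R}.
Hypothesis unimodular : forall i, det3 (P (i - 1)) (P i) (P (i + 1)) = 1.
Hypothesis recurrence : forall i,
  P (i + 2%:R) = a (i + 1) *: P (i + 1) - b i *: P i + P (i - 1).

Lemma det3_omit_succ j : det3 (P (j - 1)) (P j) (P (j + 2%:R)) = a (j + 1).
Proof.
by rewrite recurrence det3_linear3 unimodular det3_rep23 det3_rep13 mulr1 mulr0 subr0 addr0.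
Qed.

Lemma det3_omit_self j : det3 (P (j - 1)) (P (j + 1)) (P (j + 2%:R)) = b j.
Proof.
rewrite recurrence det3_linear3 det3_rep23 det3_swap23 unimodular det3_rep13.
ring.
Qed.

Lemma det3_omit_self_succ2 j :
  det3 (P (j - 1)) (P (j + 1)) (P (j + 3%:R)) = a (j + 2%:R) * b j - 1.
Proof.
have -> : j + 3%:R = j + 1 + 2%:R by rewrite -addrA [1 + _]addrC natr1.
have succ_succ : j + 1 + 1 = j + 2%:R by rewrite -addrA.
rewrite recurrence succ_succ addrK det3_linear3 det3_omit_self det3_rep23.
rewrite det3_swap23 unimodular.
ring.
Qed.

End UnimodularPolygon.

Theorem lemma2p1 (R : realType) (P : 'Z_5 -> 'rV[R]_3) (a b : 'Z_5 -> R)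
  (hdet : forall i : 'Z_5, det3 (P (i - 1)) (P i) (P (i + 1)) = 1)
  (hrec : forall i : 'Z_5,
      P (i + 2%:R) = a (i + 1) *: P (i + 1) - b i *: P i + P (i - 1)) :
  forall i : 'Z_5, b i = a (i + 3%:R) /\ a i + 1 = a (i + 2%:R) * a (i + 3%:R).
Proof.
move=> i.
have e1 : i + 2%:R - 1 = i + 1 by rewrite -addrA; congr (_ + _); apply/val_inj.
have e2 : i + 2%:R + 2%:R = i - 1 by rewrite -addrA; congr (_ + _); apply/val_inj.
have e3 : i + 2%:R + 1 = i + 3%:R by rewrite -addrA; congr (_ + _); apply/val_inj.
have e4 : i - 1 - 1 = i + 3%:R by rewrite -addrA; congr (_ + _); apply/val_inj.
have e5 : i - 1 + 2%:R = i + 1 by rewrite -addrA; congr (_ + _); apply/val_inj.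
have b_eq : b i = a (i + 3%:R).
  rewrite -(det3_omit_self hdet hrec) det3_cycle.
  by have := det3_omit_succ hdet hrec (i + 2%:R); rewrite e1 e2 e3.
split=> //.
have := det3_omit_succ hdet hrec (i - 1); rewrite e4 e5 subrK det3_cycle.
by rewrite (det3_omit_self_succ2 hdet hrec) => <-; rewrite subrK b_eq.
Qed.
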